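(* Let $U,V\in K_{\mathfrak{C}}$ with $U\cap V\neq\varnothing$. If $G\in\mathscr{K}(U)$ and $H\in\mathscr{K}(V)$, then $\langle G\cup H\rangle\in\mathscr{K}(U\cup V)$. If moreover $G$ and $H$ are finitely generated, then $\langle G\cup H\rangle$ is finitely generated (so lies in $\mathscr{K}^{\mathrm{f.g.}}(U\cup V)$).
   Context: $\mathfrak{C}$ denotes a Cantor space (a space homeomorphic to $\{0,1\}^\omega$). Groups of homeomorphisms act on the right. $K_{\mathfrak{C}}$ denotes the set of non-empty proper clopen subsets of $\mathfrak{C}$. For $\gamma\in\operatorname{Homeo}(\mathfrak{C})$, $\operatorname{supp}(\gamma)=\{p\in\mathfrak{C}: p\gamma\neq p\}$. For a non-empty $D\subseteq\mathfrak{C}$, a subgroup $G\le\operatorname{Homeo}(\mathfrak{C})$ is vigorous over $D$ if for every non-empty clopen $A\subseteq D$ and all non-empty proper clopen subsets $B,C$ of $A$ there is $\gamma\in G$ with $\operatorname{supp}(\gamma)\subseteq A$ and $B\gamma\subseteq C$. $\mathscr{K}(D)$ is the family of simple subgroups $G\le\operatorname{Homeo}(\mathfrak{C})$ such that $\operatorname{supp}(g)\subseteq D$ for all $g\in G$ and $G$ is vigorous over $D$; $\mathscr{K}^{\mathrm{f.g.}}(D)$ is the subfamily of finitely generated groups in $\mathscr{K}(D)$. *)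

From HB Require Import structures.
From mathcomp Require Import all_boot all_order all_algebra.
From mathcomp Require Import all_classical all_reals all_analysis.
Set Implicit Arguments. Unset Strict Implicit. Unset Printing Implicit Defensive.
Local Open Scope classical_set_scope.

(* The Cantor space is mathcomp-analysis's
   cantor_space = nat -> bool with the product topology. *)
Notation C := cantor_space.
Definition fn := C -> C.

Definition homeo (f : fn) : Prop :=
  continuous f /\ exists g : fn, continuous g /\ g \o f = id /\ f \o g = id.

(* a subgroup of Homeo(C), viewed as a set of functions; the group product
   (right action: p(gh) = (pg)h) is  h \o g, inverse is the inverse map. *)
Definition is_homeo_group (G : set fn) : Prop :=
  G `<=` homeo /\ G id /\
  (forall f g, G f -> G g -> G (g \o f)) /\
  (forall f, G f -> exists g, G g /\ g \o f = id /\ f \o g = id).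

Definition normal_sub (N G : set fn) : Prop :=
  is_homeo_group N /\ N `<=` G /\
  (forall g g' n, G g -> g' \o g = id -> g \o g' = id -> N n ->
     N (g \o n \o g')).

Definition simple_group (G : set fn) : Prop :=
  is_homeo_group G /\ (exists g, G g /\ g <> id) /\
  (forall N, normal_sub N G -> N = [set id] \/ N = G).

Definition gen (S : set fn) : set fn :=
  [set f | forall H, is_homeo_group H -> S `<=` H -> H f].

Definition fin_gen (G : set fn) : Prop :=
  exists S : set fn, finite_set S /\ gen S = G.

Definition supp (f : fn) : set C := [set p | f p <> p].

Definition KC (A : set C) : Prop := clopen A /\ A !=set0 /\ A <> setT.

Definition vigorous (G : set fn) (D : set C) : Prop :=
  forall A B E : set C, clopen A -> A !=set0 -> A `<=` D ->
    clopen B -> B !=set0 -> B `<` A ->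
    clopen E -> E !=set0 -> E `<` A ->
    exists g, G g /\ supp g `<=` A /\ g @` B `<=` E.

Definition scrK (D : set C) (G : set fn) : Prop :=
  simple_group G /\ (forall g, G g -> supp g `<=` D) /\ vigorous G D.

Definition scrK_fg (D : set C) (G : set fn) : Prop := scrK D G /\ fin_gen G.

From mathcomp Require Import all_boot all_classical all_reals all_analysis.
Local Open Scope classical_set_scope.
Set Implicit Arguments. Unset Strict Implicit.

(* Support is immediate, since maps supported in U | V form a group.
   Vigour is the heart of the matter.  Given a clopen A in U | V meeting both
   P = A \ V and Q = A \ U, we conjugate an element of G by one of H (or vice
   versa) through the overlap X = U & V to obtain "bridges", elements supported
   in A that push everything of A outside a small piece of Q into U.  With
   bridges and the vigour of G on A & U we compress the complement of any
   one-sided clopen piece of A into any other one-sided piece.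
   Simplicity follows the classical commutator argument: a normal subgroup N
   containing an element that moves a point of U contains a non-trivial
   element of the simple group G (a double commutator), hence all of G; it
   then meets H non-trivially through U & V, so it also contains H.
   Finite generation holds because <<S> | <T>> = <S | T>. *)

Lemma clopenD (A B : set C) : clopen A -> clopen B -> clopen (A `\` B).
Proof. by move=> cA cB; apply: clopenI cA (clopenC setT cB). Qed.

Lemma not_open1 (p : C) : ~ open [set p].
Proof. by move: cantor_perfect => /perfectTP. Qed.

Lemma clopen_base (O : set C) (p : C) : open O -> O p ->
  exists W, [/\ clopen W, W p & W `<=` O].
Proof.
move=> oO Op.
have [|W [Wp cW] WO] := @zero_dimensional_cvg C p cantor_space_hausdorff
  cantor_zero_dimensional cantor_space_compact O; first exact: open_nbhs_nbhs.
by exists W.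
Qed.

Lemma displaced_nbhd (f : fn) (O : set C) (p : C) : continuous f -> f p <> p ->
  open O -> O p ->
  exists W, [/\ clopen W, W p, W `<=` O & forall q, W q -> ~ W (f q)].
Proof.
move=> cf fp oO Op.
have [Z [cZ Zp nZfp]] : exists Z : set C, [/\ clopen Z, Z p & ~ Z (f p)].
  by apply: cantor_zero_dimensional; apply/eqP => /esym.
have oI : open (O `&` Z `&` f @^-1` (~` Z)).
  apply: openI; first exact: openI _ cZ.1.
  by apply: open_comp => [x _|]; [exact: cf | exact: closed_openC cZ.2].
have [W [cW Wp WO]] := clopen_base oI (conj (conj Op Zp) nZfp).
exists W; split=> // [x /WO [[]] //|q /WO [[_ _] /= nZfq] /WO [[_ Zfq] _]].
exact: nZfq.
Qed.

(* Since C is perfect, a non-empty clopen set splits into two non-empty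
   clopen pieces W & Z and W \ Z. *)
Lemma split_clopen (W : set C) : clopen W -> W !=set0 ->
  exists Z, [/\ clopen Z, W `&` Z !=set0 & W `\` Z !=set0].
Proof.
move=> cW [p Wp].
have [q Wq qp] : exists2 q, W q & q <> p.
  apply: contrapT => noq; apply: (@not_open1 p).
  suff -> : [set p] = W by exact: cW.1.
  apply/seteqP; split=> [x -> //|x Wx]; apply: contrapT => xp.
  by apply: noq; exists x.
have [Z [cZ Zp nZq]] : exists Z : set C, [/\ clopen Z, Z p & ~ Z q].
  by apply: cantor_zero_dimensional; apply/eqP => /esym.
by exists Z; split; [|exists p|exists q].
Qed.

Lemma compK (f g : fn) : g \o f = id -> forall x, g (f x) = x.
Proof. by move=> gf x; rewrite -[RHS]/(id x) -gf. Qed.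

Lemma grp_id (K : set fn) : is_homeo_group K -> K id.
Proof. by case=> _ []. Qed.

Lemma grp_comp (K : set fn) (f g : fn) : is_homeo_group K -> K f -> K g -> K (g \o f).
Proof. by case=> _ [_ [Kcomp _]]; apply: Kcomp. Qed.

Lemma grp_cont (K : set fn) (f : fn) : is_homeo_group K -> K f -> continuous f.
Proof. by move=> [Khomeo _] /Khomeo []. Qed.

Lemma grp_inv (K : set fn) (f : fn) : is_homeo_group K -> K f ->
  exists g, [/\ K g, forall x, g (f x) = x & forall x, f (g x) = x].
Proof.
move=> [_ [_ [_ Kinv]]] /Kinv [g [Kg [gf fg]]].
by exists g; split=> //; apply: compK.
Qed.

Lemma inv_uniq (f g g' : fn) :
  (forall x, g (f x) = x) -> (forall x, f (g' x) = x) -> g = g'.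
Proof. by move=> gf fg'; apply/funext => x; rewrite -[in RHS](gf (g' x)) fg'. Qed.

Lemma homeo_group : is_homeo_group homeo.
Proof.
have cid : continuous (@id C) by move=> x; exact: cvg_id.
split=> //; split; first by split=> //; exists id.
split=> [f g [cf [fi [cfi [fif ffi]]]] [cg [gi [cgi [gig ggi]]]]|].
  split; first by move=> x; apply: continuous_comp; [exact: cf | exact: cg].
  exists (fi \o gi); split; first by move=> x; apply: continuous_comp; [exact: cgi | exact: cfi].
  by split; apply/funext => x /=; rewrite ?(compK gig) ?(compK fif) ?(compK ffi) ?(compK ggi).
move=> f [cf [fi [cfi [fif ffi]]]]; exists fi; split=> //.
by split=> //; exists f.
Qed.

Lemma gen_sub (S : set fn) : S `<=` gen S.
Proof. by move=> f Sf K _ /(_ f Sf). Qed.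

Lemma gen_min (S K : set fn) : is_homeo_group K -> S `<=` K -> gen S `<=` K.
Proof. by move=> hK SK f /(_ K hK SK). Qed.

Lemma gen_mono (S T : set fn) : S `<=` T -> gen S `<=` gen T.
Proof. by move=> ST f Sf K hK TK; apply: Sf => // g /ST /TK. Qed.

Lemma gen_group (S : set fn) : S `<=` homeo -> is_homeo_group (gen S).
Proof.
move=> Shomeo.
have gen_homeo : gen S `<=` homeo by apply: gen_min => //; exact: homeo_group.
split=> //; split; first by move=> K hK _; exact: grp_id.
split=> [f g Sf Sg K hK SK|f Sf]; first by apply: grp_comp; [|exact: Sf|exact: Sg].
have [_ [g [_ [gf fg]]]] := gen_homeo f Sf.
exists g; split=> // K hK SK; have [g' [Kg' g'f fg']] := grp_inv hK (Sf K hK SK).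
by rewrite (inv_uniq (compK gf) fg').
Qed.

Lemma suppP (f : fn) (D : set C) : supp f `<=` D <-> forall q, ~ D q -> f q = q.
Proof.
split=> [fD q nDq|fixD q fq]; apply: contrapT; last by move=> /fixD.
by move=> /fD.
Qed.

Lemma supp_comp (f g : fn) (D : set C) :
  supp f `<=` D -> supp g `<=` D -> supp (g \o f) `<=` D.
Proof. by move=> /suppP fD /suppP gD; apply/suppP => q nDq /=; rewrite fD // gD. Qed.

Lemma supp_inv (f g : fn) (D : set C) :
  (forall x, g (f x) = x) -> supp f `<=` D -> supp g `<=` D.
Proof. by move=> gf /suppP fD; apply/suppP => q nDq; rewrite -{1}(fD q nDq) gf. Qed.

Lemma maps_in (f g : fn) (A : set C) (q : C) :
  (forall x, g (f x) = x) -> supp f `<=` A -> A q -> A (f q).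
Proof.
move=> gf /suppP fA Aq; apply: contrapT => nAfq.
have fq : f q = q by rewrite -[LHS]gf (fA _ nAfq) gf.
by apply: nAfq; rewrite fq.
Qed.

Lemma supp_conj (k ki h : fn) :
  (forall x, k (ki x) = x) -> supp (k \o h \o ki) `<=` k @` supp h.
Proof.
move=> kki y hy; exists (ki y) => //.
by move=> hfix; apply: hy; rewrite /= hfix kki.
Qed.

Lemma disjoint_commute (a ai b bi : fn) :
  (forall x, ai (a x) = x) -> (forall x, bi (b x) = x) ->
  (forall q, a q <> q -> b q <> q -> False) -> forall q, a (b q) = b (a q).
Proof.
move=> aia bib disj q.
have fixed_image (f fi : fn) r : (forall x, fi (f x) = x) -> f r <> r -> f (f r) <> f r.
  by move=> fif fr ffr; apply: fr; rewrite -[RHS](fif r) -ffr fif.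
have [aq|aq] := pselect (a q = q); have [bq|bq] := pselect (b q = q).
- by rewrite aq bq.
- rewrite aq; apply: contrapT => abq; exact: disj (b q) abq (fixed_image _ _ _ bib bq).
- rewrite bq; apply: contrapT => baq; exact: disj (a q) (fixed_image _ _ _ aia aq) (nesym baq).
- by case: (disj q aq bq).
Qed.

(* Vigour of K
   over D says that carries K A B E holds for clopen B, E properly inside a
   clopen A in D; the lemmas below manipulate this relation. *)
Definition carries (K : set fn) (A S T : set C) : Prop :=
  exists g, [/\ K g, supp g `<=` A & forall x, S x -> T (g x)].

Lemma carries_sub (K : set fn) (A S S' T T' : set C) :
  S' `<=` S -> T `<=` T' -> carries K A S T -> carries K A S' T'.
Proof. by move=> S'S TT' [g [Kg gA gST]]; exists g; split=> // x /S'S /gST /TT'. Qed.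

Lemma carries_widen (K K' : set fn) (A A' S T : set C) :
  K `<=` K' -> A `<=` A' -> carries K A S T -> carries K' A' S T.
Proof.
by move=> KK' AA' [g [Kg gA gST]]; exists g; split=> // [|x /gA]; [exact: KK'|exact: AA'].
Qed.

Lemma carries_trans (K : set fn) (A S T R : set C) : is_homeo_group K ->
  carries K A S T -> carries K A T R -> carries K A S R.
Proof.
move=> hK [g [Kg gA gST]] [h [Kh hA hTR]].
by exists (h \o g); split=> [||x /gST /hTR //]; [exact: grp_comp|exact: supp_comp].
Qed.

Lemma carries_compl (K : set fn) (A S T : set C) : is_homeo_group K ->
  carries K A S T -> carries K A (A `\` T) (A `\` S).
Proof.
move=> hK [g [Kg gA gST]]; have [gi [Kgi gig ggi]] := grp_inv hK Kg.
exists gi; split=> // [|x [Ax nTx]]; first exact: supp_inv gig gA.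
split; first exact: maps_in ggi (supp_inv gig gA) Ax.
by move=> /gST; rewrite ggi.
Qed.

(* Vigour without the non-degeneracy side conditions of its definition: B
   may be empty and E may be all of A (the identity then works); only a point
   of A outside B is required. *)
Lemma carries_vigorous (K : set fn) (D A B E : set C) : vigorous K D -> K id ->
  clopen A -> A `<=` D -> clopen B -> B `<=` A -> A `\` B !=set0 ->
  clopen E -> E !=set0 -> E `<=` A -> carries K A B E.
Proof.
move=> vK Kid cA AD cB BA [a [Aa nBa]] cE E0 EA.
have [[b Bb]|B0] := pselect (B !=set0); last first.
  by exists id; split=> // x Bx; exfalso; apply: B0; exists x.
have [AE|/nonsubset [e [Ae nEe]]] := pselect (A `<=` E).
  by exists id; split=> // x /BA /AE.
have [g [Kg [gA gBE]]] := vK A B E cA (ex_intro _ a Aa) AD cB (ex_intro _ b Bb)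
  (conj BA (fun AB => nBa (AB a Aa))) cE E0 (conj EA (fun AE => nEe (AE e Ae))).
by exists g; split=> // x Bx; apply: gBE; exists x.
Qed.

Lemma nontrivial_in (K : set fn) (D W : set C) : vigorous K D -> K id ->
  clopen W -> W `<=` D -> W !=set0 ->
  exists g q, [/\ K g, supp g `<=` W & g q <> q].
Proof.
move=> vK Kid cW WD W0.
have [Z [cZ [b [Wb Zb]] [e [We nZe]]]] := split_clopen cW W0.
have [g [Kg gW gmoves]] : carries K W (W `&` Z) (W `\` Z).
  apply: (carries_vigorous vK Kid cW WD (clopenI cW cZ) (@subIsetl _ W Z) _
    (clopenD cW cZ) _ (@subDsetl _ W Z)); first by exists e; split=> // -[].
  by exists e.
by exists g, b; split=> // gb; case: (gmoves b (conj Wb Zb)); rewrite gb.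
Qed.

Section Bridge.
Variables (U V : set C) (G H Gm : set fn).
Hypotheses (cU : clopen U) (cV : clopen V) (UV0 : U `&` V !=set0).
Hypotheses (hG : is_homeo_group G) (hH : is_homeo_group H) (hM : is_homeo_group Gm).
Hypotheses (GM : G `<=` Gm) (HM : H `<=` Gm) (vG : vigorous G U) (vH : vigorous H V).
Variable A : set C.
Hypotheses (cA : clopen A) (AUV : A `<=` U `|` V).
Hypotheses (P0 : A `\` V !=set0) (Q0 : A `\` U !=set0).

(* With P := A \ V, Q := A \ U and X := U & V, take
   k in G supported in P | X with k(X) in P, and h in H supported in X | Q
   pushing (X | Q) \ Z into X.  The conjugate k h k^-1 is supported in
   k(X | Q), which lies in P | Q and so in A, and it pushes everything of A
   outside Z into A & U: the part of Q outside Z travels through X into P. *)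
Lemma bridge (Z : set C) : clopen Z -> Z !=set0 -> Z `<=` A `\` U ->
  carries Gm A (A `\` Z) (A `&` U).
Proof.
move=> cZ [z Zz] ZQ.
pose P := A `\` V; pose Q := A `\` U; pose X := U `&` V.
have PU : P `<=` U by move=> x [/AUV [] // Vx /(_ Vx)].
have QnPX : forall w, Q w -> ~ (P `|` X) w by move=> w [_ nUw] [/PU|[]].
have [p0 Pp0] := P0.
have [k [Gk kPX kXP]] : carries G (P `|` X) X P.
  apply: (carries_vigorous vG (grp_id hG)).
  - exact: clopenU (clopenD cA cV) (clopenI cU cV).
  - by move=> x [/PU|[]].
  - exact: clopenI cU cV.
  - exact: subsetUr.
  - by exists p0; split; [left|case=> _ /Pp0.2].
  - exact: clopenD cA cV.
  - exact: P0.
  - exact: subsetUl.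
have [h [Hh hXQ hXQZ]] : carries H (X `|` Q) ((X `|` Q) `\` Z) X.
  apply: (carries_vigorous vH (grp_id hH)).
  - exact: clopenU (clopenI cU cV) (clopenD cA cU).
  - by move=> x [[]|[/AUV [] // Ux /(_ Ux)]].
  - exact: clopenD (clopenU (clopenI cU cV) (clopenD cA cU)) cZ.
  - exact: subDsetl.
  - by exists z; split=> [|[_ /(_ Zz)]] //; right; exact: ZQ.
  - exact: clopenI cU cV.
  - exact: UV0.
  - exact: subsetUl.
have [ki [Gki kik kki]] := grp_inv hG Gk.
have kfix := iffLR (suppP _ _) kPX.
have kifix := iffLR (suppP _ _) (supp_inv kik kPX).
exists (k \o h \o ki); split.
- exact: grp_comp hM (GM Gki) (grp_comp hM (HM Hh) (GM Gk)).
- move=> y /(supp_conj kki) [w /hXQ [Xw|Qw] <-]; first exact: (kXP w Xw).1.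
  by rewrite kfix; [exact: Qw.1|exact: QnPX].
move=> y [Ay nZy] /=.
have [wXQZ|nwXQZ] := pselect (((X `|` Q) `\` Z) (ki y)).
  by have [Akhw nVkhw] := kXP _ (hXQZ _ wXQZ); split=> //; exact: PU.
have [XQw|nXQw] := pselect ((X `|` Q) (ki y)).
  have Zw : Z (ki y) by apply: contrapT => nZw; exact: nwXQZ.
  by case: nZy; rewrite -(kki y) kfix //; apply: QnPX; exact: ZQ.
rewrite (iffLR (suppP _ _) hXQ _ nXQw) kki; split=> //.
apply: contrapT => nUy; apply: nXQw; right.
by rewrite kifix; [split|apply: QnPX].
Qed.

(* The image t(R) of a clopen R in A \ Z under the bridge element t for Z is
   a clopen subset of A & U, which misses t(R') for any non-empty R'
   disjoint from R; so it is a proper subset on which G acts vigorously. *)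
Lemma bridge_image (Z R R' : set C) : clopen Z -> Z !=set0 -> Z `<=` A `\` U ->
  clopen R -> R `<=` A `\` Z -> R' `<=` (A `\` Z) `\` R -> R' !=set0 ->
  exists S, [/\ clopen S, S `<=` A `&` U, (A `&` U) `\` S !=set0 & carries Gm A R S].
Proof.
move=> cZ Z0 ZQ cR RAZ R'R [r' R'r'].
have [t [Mt tA tU]] := bridge cZ Z0 ZQ.
have [ti [Mti tit _]] := grp_inv hM Mt.
exists ((A `&` U) `&` ti @^-1` R); split.
- exact: clopenI (clopenI cA cU) (preimage_clopen cR (grp_cont hM Mti)).
- exact: subIsetl.
- have [AZr' nRr'] := R'R _ R'r'.
  by exists (t r'); split; [exact: tU AZr'|rewrite /= tit => -[]].
- by exists t; split=> // x Rx; split; [exact: tU (RAZ _ Rx)|rewrite /= tit].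
Qed.

(* Split Q = A \ U into Q1 and
   Q2 = Qs | Qa.  Bridging Q1 away and then using G moves Q2 into Y, hence
   A \ Y into A \ Q2.  Bridging Qs away moves A \ Q2 into a clopen S2 in
   A & U missing the image of Qa, and G finally moves S2 into F. *)
Lemma compress_within_U (Y F : set C) : clopen Y -> Y !=set0 -> Y `<=` A `&` U ->
  clopen F -> F !=set0 -> F `<=` A `&` U -> carries Gm A (A `\` Y) F.
Proof.
move=> cY Y0 YAU cF F0 FAU.
have cQ : clopen (A `\` U) := clopenD cA cU.
have [Z1 [cZ1 Q1ne Q2ne]] := split_clopen cQ Q0.
pose Q2 := (A `\` U) `\` Z1.
have cQ2 : clopen Q2 := clopenD cQ cZ1.
have [Z2 [cZ2 Qsne Qane]] := split_clopen cQ2 Q2ne.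
have AU_A : A `&` U `<=` A := @subIsetl _ A U.
have compress_in_U := carries_vigorous vG (grp_id hG) (clopenI cA cU) (@subIsetr _ A U).
pose Q1 := (A `\` U) `&` Z1.
have Q2_AQ1 : Q2 `<=` A `\` Q1 by move=> x [[Ax nUx] nZx]; split=> // -[_].
have Y_AQ1Q2 : Y `<=` (A `\` Q1) `\` Q2.
  by move=> y /YAU [Ay Uy]; split; [split=> // -[[_]]|case=> -[_]].
have [S1 [cS1 S1AU S1out moveQ2]] :=
  bridge_image (clopenI cQ cZ1) Q1ne (@subIsetl _ _ _) cQ2 Q2_AQ1 Y_AQ1Q2 Y0.
have rho : carries Gm A Q2 Y.
  apply: carries_trans hM moveQ2 (carries_widen GM AU_A _).
  exact: compress_in_U cS1 S1AU S1out cY Y0 YAU.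
pose Qs := Q2 `&` Z2.
have Qs_Q : Qs `<=` A `\` U by move=> x [[]].
have AQ2_AQs : A `\` Q2 `<=` A `\` Qs by move=> x [Ax nQ2x]; split=> // -[].
have Qa_out : Q2 `\` Z2 `<=` (A `\` Qs) `\` (A `\` Q2).
  by move=> x [Q2x nZ2x]; split; [split; [exact: Q2x.1.1|case]|case].
have [S2 [cS2 S2AU S2out moveAQ2]] :=
  bridge_image (clopenI cQ2 cZ2) Qsne Qs_Q (clopenD cA cQ2) AQ2_AQs Qa_out Qane.
apply: carries_trans hM (carries_compl hM rho) (carries_trans hM moveAQ2 _).
apply: carries_widen GM AU_A _.
exact: compress_in_U cS2 S2AU S2out cF F0 FAU.
Qed.

End Bridge.

Definition one_sided (U V A W : set C) : Prop := W `<=` A `&` U \/ W `<=` A `&` V.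

Section VigorousJoin.
Variables (U V : set C) (G H Gm : set fn).
Hypotheses (cU : clopen U) (cV : clopen V) (UV0 : U `&` V !=set0).
Hypotheses (hG : is_homeo_group G) (hH : is_homeo_group H) (hM : is_homeo_group Gm).
Hypotheses (GM : G `<=` Gm) (HM : H `<=` Gm) (vG : vigorous G U) (vH : vigorous H V).

(* Compression A \ Y -> F for one-sided Y, F.  The mixed cases pass
   through P = A \ V (in U) and Q = A \ U (in V), using the U-case and its
   mirror image obtained by exchanging (U, G) with (V, H). *)
Lemma compress_one_sided (A Y F : set C) : clopen A -> A `<=` U `|` V ->
  A `\` V !=set0 -> A `\` U !=set0 ->
  clopen Y -> Y !=set0 -> one_sided U V A Y ->
  clopen F -> F !=set0 -> one_sided U V A F -> carries Gm A (A `\` Y) F.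
Proof.
move=> cA AUV P0 Q0.
have VU0 : V `&` U !=set0 by rewrite setIC.
have AVU : A `<=` V `|` U by rewrite setUC.
have within_U Y F :=
  @compress_within_U _ _ _ _ _ cU cV UV0 hG hH hM GM HM vG vH A cA AUV P0 Q0 Y F.
have within_V Y F :=
  @compress_within_U _ _ _ _ _ cV cU VU0 hH hG hM HM GM vH vG A cA AVU Q0 P0 Y F.
have P_AU : A `\` V `<=` A `&` U by move=> x [/[dup] /AUV [] // Vx _ /(_ Vx)].
have Q_AV : A `\` U `<=` A `&` V by move=> x [/[dup] /AUV [] // Ux _ /(_ Ux)].
have P_AQ : A `\` V `<=` A `\` (A `\` U) by move=> x /P_AU [Ax Ux]; split=> // -[].
have Q_AP : A `\` U `<=` A `\` (A `\` V) by move=> x /Q_AV [Ax Vx]; split=> // -[].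
have cP := clopenD cA cV; have cQ := clopenD cA cU.
move=> cY Y0 [YU|YV] cF F0 [FU|FV].
- exact: within_U.
- apply: carries_trans hM (within_U _ _ cY Y0 YU cP P0 P_AU) _.
  exact: carries_sub P_AQ (@subset_refl _ _) (within_V _ _ cQ Q0 Q_AV cF F0 FV).
- apply: carries_trans hM (within_V _ _ cY Y0 YV cQ Q0 Q_AV) _.
  exact: carries_sub Q_AP (@subset_refl _ _) (within_U _ _ cP P0 P_AU cF F0 FU).
- exact: within_V.
Qed.

Lemma one_sided_piece (A W : set C) : A `<=` U `|` V -> clopen W -> W !=set0 -> W `<=` A ->
  exists W', [/\ clopen W', W' !=set0, W' `<=` W & one_sided U V A W'].
Proof.
move=> AUV cW [w Ww] WA.
have [[u [Wu Uu]]|noU] := pselect (W `&` U !=set0).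
  by exists (W `&` U); split; [exact: clopenI|exists u|exact: subIsetl|left=> x [/WA]].
exists W; split=> //; first by exists w.
right=> x Wx; split; first exact: WA.
by case: (AUV x (WA x Wx)) => // Ux; case: noU; exists x.
Qed.

(* Vigour of the join: if A lies in U or in V use G or H; otherwise compress
   the complement of a one-sided piece Y of A \ B into a one-sided piece F
   of E; B lies outside Y. *)
Lemma vigorous_join : vigorous Gm (U `|` V).
Proof.
move=> A B E cA [a Aa] AUV cB B0 [BA nAB] cE E0 [EA nAE].
have [AU|/nonsubset AnU] := pselect (A `<=` U).
  have [g [Gg gAB]] := vG cA (ex_intro _ a Aa) AU cB B0 (conj BA nAB) cE E0 (conj EA nAE).
  by exists g; split; first exact: GM.
have [AV|/nonsubset AnV] := pselect (A `<=` V).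
  have [g [Hg gAB]] := vH cA (ex_intro _ a Aa) AV cB B0 (conj BA nAB) cE E0 (conj EA nAE).
  by exists g; split; first exact: HM.
have [Y [cY Y0 YAB sY]] := one_sided_piece AUV (clopenD cA cB) (nonsubset nAB) (@subDsetl _ A B).
have [F [cF F0 FE sF]] := one_sided_piece AUV cE E0 EA.
have [g [Mg gA gYF]] := compress_one_sided cA AUV AnV AnU cY Y0 sY cF F0 sF.
exists g; split=> //; split=> // _ [x Bx <-]; apply: FE; apply: gYF; split; first exact: BA.
by move=> /YAB [].
Qed.

End VigorousJoin.

(* Let n move W off itself and let g, f be supported in W.  Then m = n g n^-1
   is supported in n(W), away from W, so it commutes with g, g^-1 and f; hence
   conjugating f by the commutator x = n g n^-1 g^-1 is the same as
   conjugating f by g^-1. *)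
Lemma displaced_conj (n ni g gi f fi : fn) (W : set C) :
  (forall x, ni (n x) = x) -> (forall x, n (ni x) = x) ->
  (forall x, gi (g x) = x) -> (forall x, g (gi x) = x) -> (forall x, fi (f x) = x) ->
  (forall q, W q -> ~ W (n q)) -> supp g `<=` W -> supp f `<=` W ->
  forall y, (n \o g \o ni \o gi) (f y) = gi (f (g ((n \o g \o ni \o gi) y))).
Proof.
move=> nin nni gig ggi fif nW gW fW y.
pose m := n \o g \o ni.
have m_inj : forall x, (n \o gi \o ni) (m x) = x by move=> x; rewrite /m /= nin gig nni.
have m_off_W : forall q, m q <> q -> ~ W q.
  by move=> q mq; have [w /gW /nW nWnw <-] := @supp_conj n ni g nni q mq.
have m_comm a ai : (forall x, ai (a x) = x) -> supp a `<=` W -> forall x, m (a x) = a (m x).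
  by move=> aia aW; apply: disjoint_commute m_inj aia _ => q /m_off_W nWq /aW.
change (m (gi (f y)) = gi (f (g (m (gi y))))).
by rewrite !(m_comm gi g) ?ggi ?(m_comm f fi) //; exact: supp_inv gig gW.
Qed.

Section NormalSubgroup.
Variables (Gm N K : set fn).
Hypotheses (hN : normal_sub N Gm) (KM : K `<=` Gm).

Lemma normal_group : is_homeo_group N.
Proof. by case: hN. Qed.

Lemma normal_commutator (n ni g gi : fn) : N n -> Gm g ->
  (forall x, ni (n x) = x) -> (forall x, gi (g x) = x) -> (forall x, g (gi x) = x) ->
  N (n \o g \o ni \o gi).
Proof.
move=> Nn Mg nin gig ggi; have [_ [_ Nconj]] := hN.
have [ni' [Nni' _ nni']] := grp_inv normal_group Nn.
have Nni : N ni by rewrite (inv_uniq nin nni').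
exact: grp_comp normal_group (Nconj _ _ _ Mg (funext gig) (funext ggi) Nni) Nn.
Qed.

Lemma normal_inter : is_homeo_group K -> normal_sub (N `&` K) K.
Proof.
move=> hK; have [hNg [_ Nconj]] := hN.
split; [split|split=> [f []//|g g' n Kg g'g gg' [Nn Kn]]].
- by move=> f [/(proj1 hNg)].
- split; first by split; [exact: grp_id hNg|exact: grp_id hK].
  split=> [f g [Nf Kf] [Ng Kg]|f [Nf Kf]]; first by split; exact: grp_comp.
  have [fi [Nfi fif ffi]] := grp_inv hNg Nf.
  have [fi' [Kfi' _ ffi']] := grp_inv hK Kf.
  exists fi; split; first by split; rewrite // (inv_uniq fif ffi').
  by split; apply/funext.
- split; first exact: Nconj (KM Kg) g'g gg' Nn.
  have [gi [Kgi gig _]] := grp_inv hK Kg.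
  rewrite -(inv_uniq gig (compK gg')).
  exact: grp_comp hK Kgi (grp_comp hK Kn Kg).
Qed.

(* Take W around
   the point with n(W) disjoint from W, g in K supported in W moving q,
   W1 around q with g(W1) disjoint from W1 and g' in K supported in W1.  The
   double commutator c of n, g and g' lies in N, and by displaced_conj it
   equals g^-1 g' g g'^-1, an element of K moving g'(q1). *)
Lemma normal_meets (n : fn) (p : C) (D : set C) : is_homeo_group K -> vigorous K D ->
  open D -> N n -> D p -> n p <> p -> exists2 c, (N `&` K) c & c <> id.
Proof.
move=> hK vK oD Nn Dp np.
have [W [cW Wp WD nW]] := displaced_nbhd (grp_cont normal_group Nn) np oD Dp.
have [g [q [Kg gW gq]]] := nontrivial_in vK (grp_id hK) cW WD (ex_intro _ p Wp).
have [W1 [cW1 W1q W1W gW1]] := displaced_nbhd (grp_cont hK Kg) gq cW.1 (gW _ gq).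
have [g' [q1 [Kg' g'W1 g'q1]]] :=
  nontrivial_in vK (grp_id hK) cW1 (fun x Wx => WD _ (W1W _ Wx)) (ex_intro _ q W1q).
have [gi [Kgi gig ggi]] := grp_inv hK Kg.
have [g'i [Kg'i g'ig' g'g'i]] := grp_inv hK Kg'.
have [ni [_ nin nni]] := grp_inv normal_group Nn.
pose x := n \o g \o ni \o gi.
have Nx : N x := normal_commutator Nn (KM Kg) nin gig ggi.
have [xi [_ xix xxi]] := grp_inv normal_group Nx.
pose c := x \o g' \o xi \o g'i.
have Nc : N c := normal_commutator Nx (KM Kg') xix g'ig' g'g'i.
have x_conj : forall z, x (g' z) = gi (g' (g (x z))).
  have g'W : supp g' `<=` W by move=> z /g'W1 /W1W.
  exact: displaced_conj nin nni gig ggi g'ig' nW gW g'W.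
have c_eq : c = gi \o g' \o g \o g'i.
  by apply/funext => y; rewrite /c /= x_conj xxi.
have c_moves : c (g' q1) <> g' q1.
  have W1q1 : W1 q1 by exact: g'W1.
  rewrite c_eq /= g'ig' (iffLR (suppP _ _) g'W1 _ (gW1 _ W1q1)) gig.
  exact: nesym.
exists c => [|c_id]; last by apply: c_moves; rewrite c_id.
split=> //; rewrite c_eq.
exact: grp_comp hK Kg'i (grp_comp hK Kg (grp_comp hK Kg' Kgi)).
Qed.

Lemma normal_absorbs (n : fn) (p : C) (D : set C) : simple_group K -> vigorous K D ->
  open D -> N n -> D p -> n p <> p -> K `<=` N.
Proof.
move=> [hK [_ Ksimple]] vK oD Nn Dp np.
have [c NKc c_id] := normal_meets hK vK oD Nn Dp np.
have [NK1|NKK] := Ksimple _ (normal_inter hK); first by move: NKc; rewrite NK1.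
by move=> f Kf; have [] : (N `&` K) f by rewrite NKK.
Qed.

(* Absorption propagates from K0 to K across an overlap of their domains: a
   non-trivial element of K0 supported in D0 & D moves a point of D. *)
Lemma normal_spreads (K0 : set fn) (D0 D : set C) : is_homeo_group K0 -> vigorous K0 D0 ->
  K0 `<=` N -> simple_group K -> vigorous K D -> clopen D0 -> clopen D ->
  D0 `&` D !=set0 -> K `<=` N.
Proof.
move=> hK0 vK0 K0N sK vK cD0 cD D0D.
have [k [q [K0k kD0D kq]]] := nontrivial_in vK0 (grp_id hK0) (clopenI cD0 cD) (@subIsetl _ _ _) D0D.
exact: normal_absorbs sK vK cD.1 (K0N _ K0k) (kD0D _ kq).2 kq.
Qed.

End NormalSubgroup.

Lemma supported_group (D : set C) : is_homeo_group [set f | homeo f /\ supp f `<=` D].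
Proof.
split; first by move=> f [].
split; first by split; [exact: grp_id homeo_group|move=> p /= []].
split=> [f g [hf fD] [hg gD]|f [hf fD]].
  by split; [exact: grp_comp homeo_group hf hg|exact: supp_comp].
have [g [hg gf fg]] := grp_inv homeo_group hf.
by exists g; split; [split=> //; exact: supp_inv gf fD|split; apply/funext].
Qed.

Lemma gen_supp (S : set fn) (D : set C) : S `<=` homeo ->
  (forall g, S g -> supp g `<=` D) -> forall g, gen S g -> supp g `<=` D.
Proof.
move=> Shomeo SD g Sg.
by have [] := gen_min (supported_group D) (fun f Sf => conj (Shomeo f Sf) (SD f Sf)) Sg.
Qed.

Lemma gen_union_gen (S T : set fn) : S `|` T `<=` homeo ->
  gen (gen S `|` gen T) = gen (S `|` T).
Proof.
move=> STh; apply/seteqP; split; last by apply: gen_mono => f [] Sf; [left|right]; exact: gen_sub.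
apply: gen_min; first exact: gen_group.
by move=> f [] /gen_mono; apply=> g Sg; [left|right].
Qed.

Lemma fin_gen_join (G H : set fn) : is_homeo_group G -> is_homeo_group H ->
  fin_gen G -> fin_gen H -> fin_gen (gen (G `|` H)).
Proof.
move=> [Gh _] [Hh _] [SG [fSG eG]] [SH [fSH eH]].
exists (SG `|` SH); split; first by rewrite finite_setU.
rewrite -eG -eH gen_union_gen // => f [Sf|Sf]; [apply: Gh; rewrite -eG|apply: Hh; rewrite -eH].
all: exact: gen_sub Sf.
Qed.

Section SimpleJoin.
Variables (U V : set C) (G H : set fn).
Hypotheses (cU : clopen U) (cV : clopen V) (UV0 : U `&` V !=set0).
Hypotheses (sG : simple_group G) (sH : simple_group H).
Hypotheses (vG : vigorous G U) (vH : vigorous H V).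

Lemma join_homeo : G `|` H `<=` homeo.
Proof. by move=> f [/(proj1 sG.1)|/(proj1 sH.1)]. Qed.

(* A normal subgroup N of <G | H> containing an element that moves a point
   of U absorbs G (simplicity and vigour of G), then H (overlap of U and V),
   hence is the whole group. *)
Lemma join_absorbs (N : set fn) (n : fn) (p : C) :
  normal_sub N (gen (G `|` H)) -> N n -> U p -> n p <> p -> N = gen (G `|` H).
Proof.
move=> hN Nn Up np; have [hNg [NM _]] := hN.
have GM : G `<=` gen (G `|` H) by move=> f Gf; apply: gen_sub; left.
have HM : H `<=` gen (G `|` H) by move=> f Hf; apply: gen_sub; right.
have GN := normal_absorbs hN GM sG vG cU.1 Nn Up np.
have HN := normal_spreads hN HM sG.1 vG GN sH vH cU cV UV0.
by apply/seteqP; split=> //; apply: gen_min => // f [/GN|/HN].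
Qed.

End SimpleJoin.

Lemma join_supp (U V : set C) (G H : set fn) :
  (forall g, G g -> supp g `<=` U) -> (forall g, H g -> supp g `<=` V) ->
  forall g, (G `|` H) g -> supp g `<=` U `|` V.
Proof. by move=> suppG suppH g [/suppG|/suppH] gD x /gD; [left|right]. Qed.

(* <G | H> is simple: a non-trivial normal subgroup moves some point of
   U | V, and join_absorbs applies on the corresponding side. *)
Lemma simple_join (U V : set C) (G H : set fn) : clopen U -> clopen V -> U `&` V !=set0 ->
  simple_group G -> simple_group H -> vigorous G U -> vigorous H V ->
  (forall g, G g -> supp g `<=` U) -> (forall g, H g -> supp g `<=` V) ->
  simple_group (gen (G `|` H)).
Proof.
move=> cU cV UV0 sG sH vG vH suppG suppH.
have GHh := join_homeo sG sH.
split; first exact: gen_group.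
split; first by have [g [Gg g_id]] := sG.2.1; exists g; split=> //; apply: gen_sub; left.
move=> N hN; have [hNg [NM _]] := hN.
have [[n [Nn n_id]]|N1] := pselect (exists n, N n /\ n <> id); last first.
  left; apply/seteqP; split=> [f Nf|f /= ->]; last exact: grp_id hNg.
  by apply: contrapT => f_id; apply: N1; exists f.
right; have [p np] : exists p, n p <> p.
  apply: contrapT => fixes; apply: n_id; apply/funext => x.
  by apply: contrapT => nx; apply: fixes; exists x.
case: (gen_supp GHh (join_supp suppG suppH) (NM _ Nn) np) => [Up|Vp].
  exact: (join_absorbs cU cV UV0 sG sH vG vH hN Nn Up np).
have VU0 : V `&` U !=set0 by rewrite setIC.
rewrite setUC in hN *; exact: (join_absorbs cV cU VU0 sH sG vH vG hN Nn Vp np).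
Qed.

Unset Implicit Arguments. Set Strict Implicit.

Theorem proposition2p16 (U V : set cantor_space) (G H : set (cantor_space -> cantor_space)) :
  KC U -> KC V -> U `&` V !=set0 -> scrK U G -> scrK V H ->
  scrK (U `|` V) (gen (G `|` H)) /\
  (fin_gen G -> fin_gen H -> scrK_fg (U `|` V) (gen (G `|` H))).
Proof.
move=> [cU _] [cV _] UV0 [sG [suppG vG]] [sH [suppH vH]].
have GHh := join_homeo sG sH.
have GM : G `<=` gen (G `|` H) by move=> f Gf; apply: gen_sub; left.
have HM : H `<=` gen (G `|` H) by move=> f Hf; apply: gen_sub; right.
have joinK : scrK (U `|` V) (gen (G `|` H)).
  split; first exact: (simple_join cU cV UV0 sG sH vG vH suppG suppH).
  split; first exact: gen_supp GHh (join_supp suppG suppH).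
  exact: vigorous_join cU cV UV0 sG.1 sH.1 (gen_group GHh) GM HM vG vH.
by split=> // fgG fgH; split=> //; exact: fin_gen_join sG.1 sH.1 fgG fgH.
Qed.
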